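(* Let $S$ be a finite semigroup, let $*:S\to S$ be an anti-involution of $S$, let $R$ be a commutative ring with $1$, and let $\alpha:S\times S\to R$ be a twisting. Assume: (A1) $\alpha(x,y)=\alpha(y^*,x^* )$ for all $x,y\in S$. (A2) For each $\mathcal D$-class $D$ of $S$ there is an idempotent $1_D\in D$ with $1_D^*=1_D$. Let $L_D$ be the $\mathcal L$-class of $1_D$, let $L_D^*=\{x^*\mid x\in L_D\}$ (this is the $\mathcal R$-class of $1_D$), and let $G_D=L_D\cap L_D^*$ (the $\mathcal H$-class of $1_D$, a group, mapped to itself by $*$). (A3) For each $\mathcal D$-class $D$ there is a map $\beta_D:L_D\times L_D^*\to G(R)$, where $G(R)$ is the group of units of $R$, such that $\beta_D(x,y)\beta_D(xy,z)=\beta_D(x,yz)\beta_D(y,z)$, $\alpha(x,y)\beta_D(xy,z)=\alpha(x,yz)\beta_D(y,z)$, and $\beta_D(x,y)=\beta_D(y^*,x^* )$, for all $x,y,z\in S$ for which every value of $\beta_D$ occurring in the respective identity has its arguments in $L_D\times L_D^*$. (A4) For each $\mathcal D$-class $D$, the twisted group algebra $R^{\beta_D}[G_D]$ (with twisting the restriction of $\beta_D$ to $G_D\times G_D$) is cellular with cell datum $(\Lambda_D,M_D,C,* )$, where $*$ here denotes the $R$-linear extension of $*|_{G_D}$ to $R^{\beta_D}[G_D]$. Write each cellular basis element of $R^{\beta_D}[G_D]$ as $C^\lambda_{st}=\sum_{g\in G_D}c^\lambda_{st}(g)\,g$ with $c^\lambda_{st}(g)\in R$. Let $\mathcal D$ denote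 the set of $\mathcal D$-classes of $S$ and, for $D\in\mathcal D$, let $\mathcal L_D$ be the set of $\mathcal L$-classes contained in $D$. Let $\Lambda=\{(D,\lambda)\mid D\in\mathcal D,\ \lambda\in\Lambda_D\}$, partially ordered by $(D_1,\lambda_1)\le(D_2,\lambda_2)$ iff $D_1<_{\mathcal D}D_2$, or $D_1=D_2$ and $\lambda_1\le\lambda_2$ in $\Lambda_{D_1}$. For $(D,\lambda)\in\Lambda$ let $M(D,\lambda)=\mathcal L_D\times M_D(\lambda)$. For each $L\in\mathcal L_D$ choose any $u_L\in L$ with $u_L\,\mathcal R\,1_D$, and for $(L,s),(K,t)\in M(D,\lambda)$ define \[C^{(D,\lambda)}_{(L,s)(K,t)}=\sum_{g\in G_D}c^\lambda_{st}(g)\,\beta_D(u_L^*,g)\,\beta_D(u_L^*g,u_K)\,(u_L^*gu_K)\in R^\alpha[S].\] Then $R^\alpha[S]$ is a cellular algebra with cell datum $(\Lambda,M,C,* )$, where $*$ is the $R$-linear extension of $*$ to $R^\alpha[S]$.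
   Context: Green's relations on a semigroup $S$ (with $S^1$ the monoid obtained by adjoining an identity): $x\le_{\mathcal R}y$ iff $x\in yS^1$; $x\le_{\mathcal L}y$ iff $x\in S^1y$; $x\le_{\mathcal J}y$ iff $x\in S^1yS^1$; $\mathcal R,\mathcal L,\mathcal J$ are the equivalences $\le\cap\ge$ of these preorders; $\mathcal H=\mathcal R\cap\mathcal L$; $\mathcal D$ is the equivalence relation generated by $\mathcal R\cup\mathcal L$. For finite $S$, $\mathcal D=\mathcal J$, so $\le_{\mathcal J}$ induces a partial order $\le_{\mathcal D}$ on the set of $\mathcal D$-classes; $D_1<_{\mathcal D}D_2$ means $D_1\le_{\mathcal D}D_2$ and $D_1\ne D_2$. An anti-involution of $S$ is a map $*:S\to S$ with $(x^* )^*=x$ and $(xy)^*=y^*x^*$. A twisting from $S$ into $R$ is a map $\alpha:S\times S\to R$ with $\alpha(x,y)\alpha(xy,z)=\alpha(x,yz)\alpha(y,z)$ for all $x,y,z$; the twisted semigroup algebra $R^\alpha[S]$ is the free $R$-module with basis $S$ and product $x\cdot y=\alpha(x,y)(xy)$ extended bilinearly (associative). By (A1), $*$ extends $R$-linearly to an anti-involution of $R^\alpha[S]$; similarly for $R^{\beta_D}[G_D]$. An anti-involution of an $R$-algebra $A$ is an $R$-linear map $*$ with $(a^* )^*=a$ and $(ab)^*=b^*a^*$. An $R$-algebra $A$ is cellular with cell datum $(\Lambda,M,C,* )$ if: (C1) $\Lambda$ is a finite poset, for each $\lambda\in\Lambda$ there is a finite set $M(\lambda)$ and elements $C^\lambda_{st}\in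 A$ ($s,t\in M(\lambda)$), and $\{C^\lambda_{st}\}$ is an $R$-basis of $A$; (C2) $*$ is an anti-involution of $A$ with $(C^\lambda_{st})^*=C^\lambda_{ts}$; (C3) for all $\lambda$, $s\in M(\lambda)$, $a\in A$ there exist $r_a(s',s)\in R$ ($s'\in M(\lambda)$) such that for every $t\in M(\lambda)$, $aC^\lambda_{st}\in\sum_{s'}r_a(s',s)C^\lambda_{s't}+A(<\lambda)$, where $A(<\lambda)$ is the $R$-span of all $C^\mu_{s''t''}$ with $\mu<\lambda$. *)

From HB Require Import structures.
From mathcomp Require Import all_boot all_order all_algebra.
Set Implicit Arguments. Unset Strict Implicit. Unset Printing Implicit Defensive.
Import Order.TTheory GRing.Theory.
Local Open Scope ring_scope.

Section Green.
Variables (S : finType) (mul : S -> S -> S).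

(* x <=_R y iff x \in y S^1 ; etc. *)
Definition leR (x y : S) : bool := (x == y) || [exists z, x == mul y z].
Definition leL (x y : S) : bool := (x == y) || [exists z, x == mul z y].
Definition leJ (x y : S) : bool :=
  [|| x == y, [exists z, x == mul y z], [exists z, x == mul z y]
    | [exists z, exists w, x == mul (mul z y) w]].
Definition Rrel (x y : S) : bool := leR x y && leR y x.
Definition Lrel (x y : S) : bool := leL x y && leL y x.
Definition Hrel (x y : S) : bool := Rrel x y && Lrel x y.
(* D = equivalence relation generated by R \cup L (reflexive-transitive closure
   of the symmetric relation R \cup L) *)
Definition Drel : rel S := connect (fun x y => Rrel x y || Lrel x y).

Definition Lclass (x : S) : {set S} := [set y | Lrel x y].
Definition Dclass (x : S) : {set S} := [set y | Drel x y].
Definition Dclasses : {set {set S}} := [set Dclass x | x : S].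
Definition LclassesIn (D : {set S}) : {set {set S}} := [set Lclass x | x in D].
Definition leDcl (D1 D2 : {set S}) : bool :=
  [exists x in D1, exists y in D2, leJ x y].
Definition ltDcl (D1 D2 : {set S}) : bool := leDcl D1 D2 && (D1 != D2).
End Green.

Definition anti_involution (S : Type) (mul : S -> S -> S) (star : S -> S) :=
  involutive star /\ forall x y, star (mul x y) = mul (star y) (star x).

Definition twisting (S : Type) (R : comPzRingType) (mul : S -> S -> S)
  (alpha : S -> S -> R) :=
  forall x y z, alpha x y * alpha (mul x y) z = alpha x (mul y z) * alpha y z.

Definition is_unit (R : comPzRingType) (r : R) := exists r' : R, r * r' = 1.

(** * Twisted semigroup algebras, realised on functions S -> R
    (the free R-module with basis S, since S is finite) *)
Section Twisted.
Variables (S : finType) (R : comPzRingType).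

Definition fscale (r : R) (a : {ffun S -> R}) : {ffun S -> R} :=
  [ffun z => r * a z].
Definition basis_el (x : S) : {ffun S -> R} := [ffun z => (z == x)%:R].
(* twisted product: x . y = alpha(x,y) (xy), extended bilinearly *)
Definition tmul (mul : S -> S -> S) (alpha : S -> S -> R)
  (a b : {ffun S -> R}) : {ffun S -> R} :=
  [ffun z => \sum_(x : S) \sum_(y : S | mul x y == z) a x * b y * alpha x y].
(* R-linear extension of star : \sum a_x x  |->  \sum a_x x^* *)
Definition fstar (star : S -> S) (a : {ffun S -> R}) : {ffun S -> R} :=
  [ffun z => a (star z)].
End Twisted.

(** * Cellular algebras (Graham--Lehrer), for an R-algebra whose elements
    are the functions a : S -> R satisfying inA (a sub-R-module),
    with multiplication mulA and map starA.
    Lam is a finite type; the poset is the subset Ls of Lam ordered by le;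
    M l (a finite subset of Mt) is M(lambda). *)
Section Cellular.
Variables (S : finType) (R : comPzRingType).
Variables (inA : {ffun S -> R} -> Prop)
  (mulA : {ffun S -> R} -> {ffun S -> R} -> {ffun S -> R})
  (starA : {ffun S -> R} -> {ffun S -> R}).
Variables (Lam : finType) (Ls : {set Lam}) (le : rel Lam)
  (Mt : finType) (M : Lam -> {set Mt}) (C : Lam -> Mt -> Mt -> {ffun S -> R}).

Definition comb (coef : Lam -> Mt -> Mt -> R) : {ffun S -> R} :=
  \sum_(l in Ls) \sum_(s in M l) \sum_(t in M l) fscale (coef l s t) (C l s t).

Definition in_lower (l : Lam) (a : {ffun S -> R}) : Prop :=
  exists d : Lam -> Mt -> Mt -> R,
    a = \sum_(mu in Ls | le mu l && (mu != l))
          \sum_(s in M mu) \sum_(t in M mu) fscale (d mu s t) (C mu s t).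

Definition cellular : Prop :=
  [/\ {in Ls, forall l, le l l},
      {in Ls &, forall l1 l2, le l1 l2 -> le l2 l1 -> l1 = l2}
    & {in Ls & &, forall l1 l2 l3, le l1 l2 -> le l2 l3 -> le l1 l3}] /\
  [/\ (forall l s t, l \in Ls -> s \in M l -> t \in M l -> inA (C l s t)),
      (forall coef, comb coef = 0 ->
         forall l s t, l \in Ls -> s \in M l -> t \in M l -> coef l s t = 0)
    & (forall a, inA a -> exists coef, a = comb coef)] /\
  [/\ (forall a, inA a -> inA (starA a)),
      (forall a, inA a -> starA (starA a) = a),
      (forall r a b, inA a -> inA b ->
          starA (fscale r a + b) = fscale r (starA a) + starA b),
      (forall a b, inA a -> inA b -> starA (mulA a b) = mulA (starA b) (starA a))
    & (forall l s t, l \in Ls -> s \in M l -> t \in M l ->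
          starA (C l s t) = C l t s)] /\
  (forall l s a, l \in Ls -> s \in M l -> inA a ->
     exists r : Mt -> R, forall t, t \in M l ->
       in_lower l (mulA a (C l s t) -
                   \sum_(s' in M l) fscale (r s') (C l s' t))).
End Cellular.

Section Theorem5Data.
Variables (S : finType) (mul : S -> S -> S) (star : S -> S) (one : {set S} -> S).

Definition LD (D : {set S}) : {set S} := Lclass mul (one D).
Definition LDs (D : {set S}) : {set S} := star @: LD D.
Definition GD (D : {set S}) : {set S} := LD D :&: LDs D.

Variables (R : comPzRingType) (beta : {set S} -> S -> S -> R).
Variables (Lam : finType) (LamD : {set S} -> {set Lam}) (leD : {set S} -> rel Lam)
  (Mt : finType) (MD : {set S} -> Lam -> {set Mt})
  (CD : {set S} -> Lam -> Mt -> Mt -> {ffun S -> R}) (u : {set S} -> S).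

Definition bigLam : {set {set S} * Lam} :=
  [set p | (p.1 \in Dclasses mul) && (p.2 \in LamD p.1)].
Definition bigLe : rel ({set S} * Lam) := fun p q =>
  ltDcl mul p.1 q.1 || ((p.1 == q.1) && leD p.1 p.2 q.2).
Definition bigM (p : {set S} * Lam) : {set {set S} * Mt} :=
  [set q | (q.1 \in LclassesIn mul p.1) && (q.2 \in MD p.1 p.2)].
Definition bigC (p : {set S} * Lam) (q1 q2 : {set S} * Mt) : {ffun S -> R} :=
  let D := p.1 in let l := p.2 in
  let L := q1.1 in let s := q1.2 in let K := q2.1 in let t := q2.2 in
  \sum_(g in GD D)
     fscale (CD D l s t g * beta D (star (u L)) g
               * beta D (mul (star (u L)) g) (u K))
            (basis_el R (mul (mul (star (u L)) g) (u K))).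
End Theorem5Data.

From HB Require Import structures.
From mathcomp Require Import all_boot all_order all_algebra.
From mathcomp Require Import ring.
From Stdlib Require Import ClassicalEpsilon.
Set Implicit Arguments. Unset Strict Implicit. Unset Printing Implicit Defensive.
Import GRing.Theory.
Local Open Scope ring_scope.

(* Every element z of a D-class D factors uniquely as u_L^* g u_K with g in the group G_D,
   L the L-class of z^* and K that of z.  Hence R^alpha[S] is the direct sum, over D and pairs
   (L, K), of copies of R^beta_D[G_D] embedded by
   c |-> sum_g c(g) beta_D(u_L^*, g) beta_D(u_L^* g, u_K) u_L^* g u_K, and since these weights
   are units the C^(D,lambda) form a basis.  Left multiplication by x either pushes
   u_L^* g u_K into a D-class strictly J-below D (when x u_L^* leaves L_D), or, writing
   x u_L^* = u_L'^* h, acts on block (L, K) as left multiplication by h in R^beta_D[G_D]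
   transported to block (L', K), up to the unit beta_D(u_L'^*, h)^-1 alpha(x, u_L^* ): the
   identities of (A3) make the weights match.  So (C3) for S follows from (C3) for G_D, and
   (C2) from (A1) and the symmetry of beta_D. *)

(** * Green's relations on a finite semigroup *)

Section GreenPreorders.
Variables (S : finType) (mul : S -> S -> S) (mulA : associative mul).
Local Notation "x ⋅ y" := (mul x y) (at level 40, left associativity).

(* The monoid S^1 is modelled by option S, None being the adjoined identity. *)
Definition rmulo (x : S) (o : option S) : S := if o is Some z then x ⋅ z else x.
Definition lmulo (o : option S) (x : S) : S := if o is Some z then z ⋅ x else x.
Definition mulo (a b : option S) : option S :=
  match a, b with None, _ => b | _, None => a | Some x, Some y => Some (x ⋅ y) end.

Lemma rmulo_rmulo x a b : rmulo (rmulo x a) b = rmulo x (mulo a b).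
Proof. by case: a; case: b => //= *; rewrite mulA. Qed.
Lemma lmulo_lmulo x a b : lmulo a (lmulo b x) = lmulo (mulo a b) x.
Proof. by case: a; case: b => //= *; rewrite mulA. Qed.
Lemma lmulo_rmulo x a b : lmulo a (rmulo x b) = rmulo (lmulo a x) b.
Proof. by case: a; case: b => //= *; rewrite mulA. Qed.
Lemma lmuloM a x y : lmulo a (x ⋅ y) = lmulo a x ⋅ y.
Proof. by case: a => //= *; rewrite mulA. Qed.
Lemma rmuloM a x y : rmulo (x ⋅ y) a = x ⋅ rmulo y a.
Proof. by case: a => //= *; rewrite mulA. Qed.
Lemma mul_lmulo x o y : x ⋅ lmulo o y = rmulo x o ⋅ y.
Proof. by case: o => //= z; rewrite mulA. Qed.

Lemma leRP x y : reflect (exists o, x = rmulo y o) (leR mul x y).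
Proof.
apply: (iffP orP) => [[/eqP->|/existsP[z /eqP->]]|[[z|] ->]].
- by exists None.
- by exists (Some z).
- by right; apply/existsP; exists z.
- by left.
Qed.

Lemma leLP x y : reflect (exists o, x = lmulo o y) (leL mul x y).
Proof.
apply: (iffP orP) => [[/eqP->|/existsP[z /eqP->]]|[[z|] ->]].
- by exists None.
- by exists (Some z).
- by right; apply/existsP; exists z.
- by left.
Qed.

Lemma leJP x y : reflect (exists o1 o2, x = rmulo (lmulo o1 y) o2) (leJ mul x y).
Proof.
apply: (iffP idP).
- case/or4P => [/eqP->|/existsP[z /eqP->]|/existsP[z /eqP->]|].
  + by exists None, None.
  + by exists None, (Some z).
  + by exists (Some z), None.
  + by case/existsP=> z /existsP[w /eqP->]; exists (Some z), (Some w).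
- move=> [[a|] [[b|] ->]] /=; apply/or4P.
  + by constructor 4; apply/existsP; exists a; apply/existsP; exists b.
  + by constructor 3; apply/existsP; exists a.
  + by constructor 2; apply/existsP; exists b.
  + by constructor 1.
Qed.

Lemma leR_refl x : leR mul x x. Proof. by apply/leRP; exists None. Qed.
Lemma leJ_refl x : leJ mul x x. Proof. by apply/leJP; exists None, None. Qed.

Lemma leR_trans x y z : leR mul x y -> leR mul y z -> leR mul x z.
Proof.
by move=> /leRP[a ->] /leRP[b ->]; apply/leRP; exists (mulo b a); rewrite rmulo_rmulo.
Qed.
Lemma leL_trans x y z : leL mul x y -> leL mul y z -> leL mul x z.
Proof.
by move=> /leLP[a ->] /leLP[b ->]; apply/leLP; exists (mulo a b); rewrite lmulo_lmulo.
Qed.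
Lemma leJ_trans x y z : leJ mul x y -> leJ mul y z -> leJ mul x z.
Proof.
move=> /leJP[a [b ->]] /leJP[c [d ->]]; apply/leJP; exists (mulo a c), (mulo d b).
by rewrite lmulo_rmulo rmulo_rmulo lmulo_lmulo.
Qed.

Lemma leR_leJ x y : leR mul x y -> leJ mul x y.
Proof. by move=> /leRP[a ->]; apply/leJP; exists None, a. Qed.
Lemma leL_leJ x y : leL mul x y -> leJ mul x y.
Proof. by move=> /leLP[a ->]; apply/leJP; exists a, None. Qed.
Lemma leR_mul x y : leR mul (x ⋅ y) x. Proof. by apply/leRP; exists (Some y). Qed.
Lemma leL_mul x y : leL mul (x ⋅ y) y. Proof. by apply/leLP; exists (Some x). Qed.

(* powS q n = q^(n+1) *)
Fixpoint powS (q : S) (n : nat) : S := if n is n'.+1 then powS q n' ⋅ q else q.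

Lemma powSS q n : powS q n.+1 = q ⋅ powS q n.
Proof. by elim: n => //= n IH; rewrite {1}IH mulA. Qed.

Lemma powSD q m n : powS q (m + n).+1 = powS q m ⋅ powS q n.
Proof.
elim: n => [|n IH]; first by rewrite addn0.
rewrite addnS; change (powS q (m + n).+1 ⋅ q = powS q m ⋅ (powS q n ⋅ q)).
by rewrite IH mulA.
Qed.

Lemma powS_rmulo q n : exists o, powS q n = rmulo q o.
Proof. by case: n => [|n]; [exists None | exists (Some (powS q n)); rewrite powSS]. Qed.

Lemma powS_absorb q : exists i k, powS q i ⋅ powS q k = powS q i.
Proof.
pose f (i : 'I_#|S|.+1) := powS q i.
have /injectivePn[i [j nij Efij]] : ~~ injectiveb f.
  by apply/injectiveP => /leq_card; rewrite card_ord ltnn.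
wlog lt_ij : i j nij Efij / (i < j)%N.
  move=> IH; have [|lt_ji|/val_inj eij] := ltngtP i j; first exact: IH.
    by apply: (IH j i); rewrite 1?eq_sym.
  by rewrite eij eqxx in nij.
exists i, (j - i).-1; rewrite -powSD -/(f i) Efij /f.
by rewrite -addnS prednK ?subn_gt0 // subnKC // ltnW.
Qed.

(* Some power of q fixes x on the right. *)
Lemma leR_loop x p q : x = lmulo p (x ⋅ q) -> leR mul x (x ⋅ q).
Proof.
move=> Hx.
have Hn n : exists po, x = lmulo po (x ⋅ powS q n).
  elim: n => [|n [po IH]]; first by exists p.
  by exists (mulo po p); rewrite powSS mulA -lmulo_lmulo lmuloM -Hx.
have [i [k Eik]] := powS_absorb q; have [po Ex] := Hn i.
have xk : x = x ⋅ powS q k by rewrite {1}Ex -Eik mulA lmuloM -Ex.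
have [o Ho] := powS_rmulo q k.
by apply/leRP; exists o; rewrite rmuloM -Ho -xk.
Qed.

Lemma leR_stable x y : leR mul x y -> leJ mul y x -> leR mul y x.
Proof.
move=> /leRP[a Ex] /leJP[o1 [o2 Ey]].
rewrite -lmulo_rmulo Ex rmulo_rmulo in Ey.
case E: (mulo a o2) Ey => [q|] Ey.
- apply: leR_trans (leR_loop Ey) _.
  by apply/leRP; exists o2; rewrite Ex rmulo_rmulo E.
- by move: E; case: a Ex => [?|] Ex; case: o2 => //= _; rewrite Ex leR_refl.
Qed.

End GreenPreorders.

Lemma leJ_op (S : finType) (mul : S -> S -> S) (mulA : associative mul) x y :
  leJ (fun a b => mul b a) x y = leJ mul x y.
Proof.
by apply/idP/idP => /leJP[a [b E]]; apply/leJP; exists b, a; move: E;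
  case: a => [?|]; case: b => [?|] /= ->; rewrite ?mulA.
Qed.

(* leL is leR of the opposite semigroup. *)
Lemma leL_stable (S : finType) (mul : S -> S -> S) (mulA : associative mul) x y :
  leL mul x y -> leJ mul y x -> leL mul y x.
Proof.
have mulopA : associative (fun a b => mul b a) by move=> a b c; rewrite mulA.
by move=> lexy; rewrite -(leJ_op mulA); apply: (leR_stable mulopA lexy).
Qed.

Section GreenRelations.
Variables (S : finType) (mul : S -> S -> S) (mulA : associative mul).
Local Notation "x ⋅ y" := (mul x y) (at level 40, left associativity).

Lemma Rrel_sym x y : Rrel mul x y = Rrel mul y x. Proof. by rewrite /Rrel andbC. Qed.
Lemma Lrel_sym x y : Lrel mul x y = Lrel mul y x. Proof. by rewrite /Lrel andbC. Qed.
Lemma Rrel_trans x y z : Rrel mul x y -> Rrel mul y z -> Rrel mul x z.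
Proof.
move=> /andP[xy yx] /andP[yz zy]; apply/andP.
by split; [apply: leR_trans mulA _ _ _ xy yz | apply: leR_trans mulA _ _ _ zy yx].
Qed.
Lemma Lrel_trans x y z : Lrel mul x y -> Lrel mul y z -> Lrel mul x z.
Proof.
move=> /andP[xy yx] /andP[yz zy]; apply/andP.
by split; [apply: leL_trans mulA _ _ _ xy yz | apply: leL_trans mulA _ _ _ zy yx].
Qed.

Lemma Drel_R x y : Rrel mul x y -> Drel mul x y.
Proof. by move=> h; apply: connect1; rewrite h. Qed.
Lemma Drel_L x y : Lrel mul x y -> Drel mul x y.
Proof. by move=> h; apply: connect1; rewrite h orbT. Qed.

Lemma Drel_leJ x y : Drel mul x y -> leJ mul x y && leJ mul y x.
Proof.
move/connectP=> [p]; elim: p x => [|z p IH] x /=; first by move=> _ ->; rewrite leJ_refl.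
case/andP => exz pz ly; case/andP: (IH z pz ly) => h1 h2.
have [h3 h4] : leJ mul x z /\ leJ mul z x.
  by case/orP: exz => /andP[? ?]; split; first [exact: leR_leJ | exact: leL_leJ].
by rewrite (leJ_trans mulA h3 h1) (leJ_trans mulA h2 h4).
Qed.

(* D = J: if y = c x d in S^1, stability makes x d R-equivalent to x and L-equivalent to y. *)
Lemma leJ_Drel x y : leJ mul x y -> leJ mul y x -> Drel mul x y.
Proof.
move=> /leJP[a [b Ex]] /leJP[c [d Ey]].
set z := rmulo mul x d.
have xz : leR mul z x by apply/leRP; exists d.
have zy : leL mul y z by apply/leLP; exists c; rewrite Ey /z lmulo_rmulo.
have Rzx : Rrel mul x z.
  rewrite /Rrel xz andbT; apply: (leR_stable mulA xz).
  apply/leJP; exists (mulo mul a c), b.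
  by rewrite {1}Ex Ey lmulo_rmulo // lmulo_lmulo // /z lmulo_rmulo.
have Lzy : Lrel mul z y.
  rewrite /Lrel zy andbT; apply: (leL_stable mulA zy).
  by apply/leJP; exists a, (mulo mul b d); rewrite /z Ex rmulo_rmulo.
by apply: (@connect_trans _ _ z); apply: connect1; rewrite ?Rzx ?Lzy ?orbT.
Qed.

Lemma Drel_J x y : Drel mul x y = leJ mul x y && leJ mul y x.
Proof. by apply/idP/idP => [/Drel_leJ|/andP[]/leJ_Drel]. Qed.

Lemma Drel_refl x : Drel mul x x. Proof. by rewrite Drel_J leJ_refl. Qed.
Lemma Drel_sym x y : Drel mul x y = Drel mul y x. Proof. by rewrite !Drel_J andbC. Qed.
Lemma Drel_trans x y z : Drel mul x y -> Drel mul y z -> Drel mul x z.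
Proof.
rewrite !Drel_J => /andP[xy yx] /andP[yz zy].
by rewrite (leJ_trans mulA xy yz) (leJ_trans mulA zy yx).
Qed.

Lemma Dclass_eq x y : Drel mul x y -> Dclass mul x = Dclass mul y.
Proof.
move=> xy; apply/setP => z; rewrite !inE; apply/idP/idP; last exact: Drel_trans.
by apply: Drel_trans; rewrite Drel_sym.
Qed.
Lemma Lclass_eq x y : Lrel mul x y -> Lclass mul x = Lclass mul y.
Proof.
move=> xy; apply/setP => z; rewrite !inE; apply/idP/idP; last exact: Lrel_trans.
by apply: Lrel_trans; rewrite Lrel_sym.
Qed.
Lemma mem_Dclass x : x \in Dclass mul x. Proof. by rewrite inE Drel_refl. Qed.
Lemma Dclass_Dclasses x : Dclass mul x \in Dclasses mul.
Proof. by apply/imsetP; exists x. Qed.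

Lemma DclassesP D y : D \in Dclasses mul -> y \in D -> D = Dclass mul y.
Proof. by case/imsetP => x _ -> ; rewrite inE => /Dclass_eq. Qed.
Lemma Drel_Dclasses D x y : D \in Dclasses mul -> x \in D -> y \in D -> Drel mul x y.
Proof. by move=> hD hx; rewrite (DclassesP hD hx) inE. Qed.

Lemma leDcl_anti D1 D2 : D1 \in Dclasses mul -> D2 \in Dclasses mul ->
  leDcl mul D1 D2 -> leDcl mul D2 D1 -> D1 = D2.
Proof.
move=> h1 h2 /existsP[x1 /andP[hx1 /existsP[y2 /andP[hy2 j1]]]].
move=> /existsP[x2 /andP[hx2 /existsP[y1 /andP[hy1 j2]]]].
have /andP[j3 _] := Drel_leJ (Drel_Dclasses h2 hy2 hx2).
have /andP[j4 _] := Drel_leJ (Drel_Dclasses h1 hy1 hx1).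
have j5 : leJ mul y2 x1 by apply: leJ_trans mulA _ _ _ j3 (leJ_trans mulA j2 j4).
by rewrite (DclassesP h1 hx1) (DclassesP h2 hy2) (Dclass_eq (leJ_Drel j1 j5)).
Qed.

Lemma leDcl_trans D1 D2 D3 : D2 \in Dclasses mul ->
  leDcl mul D1 D2 -> leDcl mul D2 D3 -> leDcl mul D1 D3.
Proof.
move=> h2 /existsP[x1 /andP[hx1 /existsP[y2 /andP[hy2 j1]]]].
move=> /existsP[x2 /andP[hx2 /existsP[y3 /andP[hy3 j2]]]].
have /andP[j3 _] := Drel_leJ (Drel_Dclasses h2 hy2 hx2).
apply/existsP; exists x1; rewrite hx1; apply/existsP; exists y3; rewrite hy3 /=.
exact: leJ_trans mulA _ _ _ j1 (leJ_trans mulA j3 j2).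
Qed.

Lemma ltDcl_irr D : ltDcl mul D D = false.
Proof. by rewrite /ltDcl eqxx andbF. Qed.

Lemma ltDcl_trans D1 D2 D3 : D1 \in Dclasses mul -> D2 \in Dclasses mul ->
  ltDcl mul D1 D2 -> ltDcl mul D2 D3 -> ltDcl mul D1 D3.
Proof.
move=> h1 h2 /andP[le12 ne12] /andP[le23 _]; rewrite /ltDcl (leDcl_trans h2 le12 le23).
by apply: contraNneq ne12 => E; apply/eqP/(leDcl_anti h1 h2 le12); rewrite E.
Qed.

Lemma ltDcl_leJ (D : {set S}) z d : d \in D -> leJ mul z d -> z \notin D ->
  ltDcl mul (Dclass mul z) D.
Proof.
move=> hd hzd hz; apply/andP; split.
- by apply/existsP; exists z; rewrite mem_Dclass; apply/existsP; exists d; rewrite hd.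
- by apply: contraNneq hz => <-; rewrite mem_Dclass.
Qed.

End GreenRelations.

(** * Twisted semigroup algebras on functions S -> R *)

Lemma big_pair_fst (R : nmodType) (T1 T2 : finType) (P : pred (T1 * T2)) (a : T1)
  (F : T1 * T2 -> R) :
  (forall p, P p -> p.1 != a -> F p = 0) ->
  \sum_(p | P p) F p = \sum_(b | P (a, b)) F (a, b).
Proof.
move=> F0.
have -> : \sum_(p | P p) F p = \sum_(p | predT p.1 && P (p.1, p.2)) F (p.1, p.2).
  by apply: eq_big => -[].
rewrite -(pair_big_dep predT (fun i j => P (i, j)) (fun i j => F (i, j))) /=.
rewrite (bigD1 a) //= [X in _ + X]big1 ?addr0 // => i ni.
by apply: big1 => j Pj; apply: F0.
Qed.

Section FunctionAlgebra.
Variables (S : finType) (R : comPzRingType).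
Implicit Types (a b : {ffun S -> R}) (r : R) (x z : S).

Lemma fscaleE r a z : fscale r a z = r * a z. Proof. by rewrite ffunE. Qed.
Lemma basis_elE x z : basis_el R x z = (z == x)%:R. Proof. by rewrite ffunE. Qed.
Lemma fscale0 a : fscale 0 a = 0.
Proof. by apply/ffunP => z; rewrite !ffunE mul0r. Qed.
Lemma fscaleDr r a b : fscale r (a + b) = fscale r a + fscale r b.
Proof. by apply/ffunP => z; rewrite !ffunE mulrDr. Qed.
Lemma fscaleDl r1 r2 a : fscale (r1 + r2) a = fscale r1 a + fscale r2 a.
Proof. by apply/ffunP => z; rewrite !ffunE mulrDl. Qed.
Lemma fscale1 a : fscale 1 a = a.
Proof. by apply/ffunP => z; rewrite !ffunE mul1r. Qed.
Lemma fscaleNl r a : fscale (- r) a = - fscale r a.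
Proof. by apply/ffunP => z; rewrite !ffunE mulNr. Qed.
Lemma fscaleNr r a : fscale r (- a) = - fscale r a.
Proof. by apply/ffunP => z; rewrite !ffunE mulrN. Qed.
Lemma fscaleA r1 r2 a : fscale r1 (fscale r2 a) = fscale (r1 * r2) a.
Proof. by apply/ffunP => z; rewrite !ffunE mulrA. Qed.
Lemma fscale_sumr r (I : finType) (P : pred I) (F : I -> {ffun S -> R}) :
  fscale r (\sum_(i | P i) F i) = \sum_(i | P i) fscale r (F i).
Proof.
apply/ffunP => z; rewrite fscaleE !sum_ffunE mulr_sumr.
by apply: eq_bigr => i _; rewrite fscaleE.
Qed.

Lemma ffun_basis_expansion (A : {set S}) a : (forall y, y \notin A -> a y = 0) ->
  a = \sum_(g in A) fscale (a g) (basis_el R g).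
Proof.
move=> a0; apply/ffunP => z; rewrite sum_ffunE.
under eq_bigr => g _ do rewrite fscaleE basis_elE.
have [zA|zA] := boolP (z \in A).
  rewrite (bigD1 z) //= eqxx mulr1 big1 ?addr0 // => g /andP[_ ng].
  by rewrite eq_sym (negbTE ng) mulr0.
rewrite a0 // big1 // => g gA; case: eqP => [Ez|]; last by rewrite mulr0.
by move: zA; rewrite Ez gA.
Qed.

Variables (mul : S -> S -> S) (tw : S -> S -> R).

Lemma tmul_basis_sum x (I : finType) (P : pred I) (f : I -> R) (y : I -> S) :
  tmul mul tw (basis_el R x) (\sum_(i | P i) fscale (f i) (basis_el R (y i))) =
  \sum_(i | P i) fscale (f i * tw x (y i)) (basis_el R (mul x (y i))).
Proof.
apply/ffunP => z; rewrite ffunE sum_ffunE.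
rewrite (bigD1 x) //= [X in _ + X]big1 => [|x' nx']; last first.
  by apply: big1 => y' _; rewrite basis_elE (negbTE nx') !mul0r.
rewrite addr0 basis_elE eqxx.
under eq_bigr => y0 _ do rewrite mul1r sum_ffunE mulr_suml.
rewrite exchange_big /=; apply: eq_bigr => i Pi.
rewrite fscaleE basis_elE; under eq_bigr => y0 _ do rewrite fscaleE basis_elE.
rewrite big_mkcond (bigD1 (y i)) //= [X in _ + X]big1 => [|y0 ny]; last first.
  by case: ifP => // _; rewrite (negbTE ny) mulr0 mul0r.
by rewrite addr0 eqxx mulr1 eq_sym; case: (z == _); rewrite ?mulr1 ?mulr0.
Qed.

Lemma tmul_expand_left a b :
  tmul mul tw a b = \sum_x fscale (a x) (tmul mul tw (basis_el R x) b).
Proof.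
apply/ffunP => z; rewrite sum_ffunE ffunE; apply: eq_bigr => x _.
rewrite fscaleE ffunE [in RHS](bigD1 x) //= [X in _ = _ * (_ + X)]big1 => [|x' nx']; last first.
  by apply: big1 => y _; rewrite basis_elE (negbTE nx') !mul0r.
rewrite addr0 mulr_sumr; apply: eq_bigr => y _.
by rewrite basis_elE eqxx mul1r !mulrA.
Qed.
End FunctionAlgebra.

Section CellularCombinations.
Variables (S : finType) (R : comPzRingType).
Variables (Lam : finType) (Ls : {set Lam}) (le : rel Lam)
  (Mt : finType) (M : Lam -> {set Mt}) (C : Lam -> Mt -> Mt -> {ffun S -> R}).
Local Notation in_lower := (in_lower Ls le M C).

Lemma combE coef z : comb Ls M C coef z =
  \sum_(l in Ls) \sum_(s in M l) \sum_(t in M l) coef l s t * C l s t z.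
Proof.
rewrite sum_ffunE; apply: eq_bigr => l _; rewrite sum_ffunE.
by apply: eq_bigr => s _; rewrite sum_ffunE; apply: eq_bigr => t _; rewrite fscaleE.
Qed.

Lemma in_lower0 l : in_lower l 0.
Proof.
exists (fun _ _ _ => 0); symmetry; apply: big1 => mu _.
by apply: big1 => s _; apply: big1 => t _; apply: fscale0.
Qed.

Lemma in_lowerD l a b : in_lower l a -> in_lower l b -> in_lower l (a + b).
Proof.
move=> [d1 ->] [d2 ->]; exists (fun m s t => d1 m s t + d2 m s t).
rewrite -big_split; apply: eq_bigr => mu _; rewrite -big_split; apply: eq_bigr => s _.
by rewrite -big_split; apply: eq_bigr => t _; rewrite fscaleDl.
Qed.

Lemma in_lowerZ l r a : in_lower l a -> in_lower l (fscale r a).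
Proof.
move=> [d ->]; exists (fun m s t => r * d m s t).
rewrite fscale_sumr; apply: eq_bigr => mu _; rewrite fscale_sumr; apply: eq_bigr => s _.
by rewrite fscale_sumr; apply: eq_bigr => t _; rewrite fscaleA.
Qed.

Lemma in_lower_sum l (I : finType) (P : pred I) (F : I -> {ffun S -> R}) :
  (forall i, P i -> in_lower l (F i)) -> in_lower l (\sum_(i | P i) F i).
Proof. by move=> lowF; apply: big_ind => //; [apply: in_lower0 | apply: in_lowerD]. Qed.

Lemma in_lower_C l mu s t : mu \in Ls -> le mu l -> mu != l -> s \in M mu -> t \in M mu ->
  in_lower l (C mu s t).
Proof.
move=> hmu hle hne hs ht.
exists (fun m s' t' => ((m == mu) && (s' == s) && (t' == t))%:R).
rewrite (bigD1 mu) /=; last by rewrite hmu hle hne.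
rewrite [X in _ + X]big1 => [|m /andP[_ nm]]; last first.
  by apply: big1 => s' _; apply: big1 => t' _; rewrite (negbTE nm) fscale0.
rewrite addr0 (bigD1 s) //= [X in _ + X]big1 => [|s' /andP[_ ns]]; last first.
  by apply: big1 => t' _; rewrite eqxx (negbTE ns) fscale0.
rewrite addr0 (bigD1 t) //= [X in _ + X]big1 => [|t' /andP[_ nt]]; last first.
  by rewrite !eqxx (negbTE nt) fscale0.
by rewrite addr0 !eqxx fscale1.
Qed.
End CellularCombinations.

(** * Structure of a D-class with a star-fixed idempotent *)

Section Star.
Variables (S : finType) (mul : S -> S -> S) (mulA : associative mul).
Variables (star : S -> S) (hstar : anti_involution mul star).
Local Notation "x ⋅ y" := (mul x y) (at level 40, left associativity).

Lemma starK : involutive star. Proof. by case: hstar. Qed.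
Lemma starM x y : star (x ⋅ y) = star y ⋅ star x. Proof. by case: hstar. Qed.
Lemma star_inj : injective star. Proof. exact: inv_inj starK. Qed.

Lemma leR_star x y : leR mul (star x) (star y) = leL mul x y.
Proof.
apply/leRP/leLP => -[o E]; exists (omap star o).
- by apply: star_inj; rewrite E; case: o {E} => [z|] //=; rewrite starM starK.
- by rewrite E; case: o {E} => [z|] //=; rewrite starM.
Qed.

Lemma leJ_star x y : leJ mul (star x) (star y) = leJ mul x y.
Proof.
suff H a b : leJ mul a b -> leJ mul (star a) (star b).
  by apply/idP/idP => [/H|/H//]; rewrite !starK.
move=> /leJP[o1 [o2 ->]]; apply/leJP; exists (omap star o2), (omap star o1).
by case: o1; case: o2 => /= *; rewrite ?starM ?mulA.
Qed.

Lemma Rrel_star x y : Rrel mul (star x) (star y) = Lrel mul x y.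
Proof. by rewrite /Rrel /Lrel !leR_star. Qed.
Lemma Drel_star x y : Drel mul (star x) (star y) = Drel mul x y.
Proof. by rewrite !(Drel_J mulA) !leJ_star. Qed.
End Star.

Section CellularStructure.
Variables (S : finType) (mul : S -> S -> S) (mulA : associative mul).
Variables (star : S -> S) (hstar : anti_involution mul star).
Variables (one : {set S} -> S)
  (A2 : forall D, D \in Dclasses mul ->
          [/\ one D \in D, mul (one D) (one D) = one D & star (one D) = one D]).
Variables (u : {set S} -> S)
  (hu : forall D, D \in Dclasses mul -> forall L, L \in LclassesIn mul D ->
          u L \in L /\ Rrel mul (u L) (one D)).
Local Notation "x ⋅ y" := (mul x y) (at level 40, left associativity).
Local Notation starK := (starK hstar).
Local Notation starM := (starM hstar).
Local Notation LD := (LD mul one).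
Local Notation LDs := (LDs mul star one).
Local Notation GD := (GD mul star one).
Local Notation lmulo := (lmulo mul).
Local Notation rmulo := (rmulo mul).

Definition sandwich (L : {set S}) g (K : {set S}) := star (u L) ⋅ g ⋅ u K.

Lemma star_sandwich L g K : star (sandwich L g K) = sandwich K (star g) L.
Proof. by rewrite /sandwich !starM starK mulA. Qed.

Section OneDclass.
Variables (D : {set S}) (hD : D \in Dclasses mul).
Local Notation e := (one D).

Lemma one_in : e \in D. Proof. by case: (A2 hD). Qed.
Lemma one_idem : e ⋅ e = e. Proof. by case: (A2 hD). Qed.
Lemma star_one : star e = e. Proof. by case: (A2 hD). Qed.

Lemma mem_D y : (y \in D) = Drel mul e y.
Proof. by rewrite {1}(DclassesP mulA hD one_in) inE. Qed.
Lemma mem_LD y : (y \in LD D) = Lrel mul e y. Proof. by rewrite inE. Qed.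
Lemma mem_LDs y : (y \in LDs D) = Rrel mul e y.
Proof.
apply/imsetP/idP => [[x]|ey].
  by rewrite mem_LD => ex ->; rewrite -star_one Rrel_star.
by exists (star y); rewrite ?starK // mem_LD -(Rrel_star hstar) star_one starK.
Qed.
Lemma GD_LD y : y \in GD D -> y \in LD D. Proof. by case/setIP. Qed.
Lemma GD_LDs y : y \in GD D -> y \in LDs D. Proof. by case/setIP. Qed.

Lemma LD_sub y : y \in LD D -> y \in D.
Proof. by rewrite mem_LD mem_D => /Drel_L. Qed.

Lemma LD_mul_one y : y \in LD D -> y ⋅ e = y.
Proof. by rewrite mem_LD => /andP[_ /leLP[o ->]]; rewrite -(lmuloM mulA) one_idem. Qed.
Lemma one_mul_LDs y : y \in LDs D -> e ⋅ y = y.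
Proof. by rewrite mem_LDs => /andP[_ /leRP[o ->]]; rewrite -(rmuloM mulA) one_idem. Qed.

Lemma mul_LD_LDs_RL a b : a \in LD D -> b \in LDs D ->
  Rrel mul (a ⋅ b) a && Lrel mul (a ⋅ b) b.
Proof.
move=> ha hb; rewrite /Rrel /Lrel leR_mul leL_mul /=; apply/andP; split.
- move: (hb); rewrite mem_LDs => /andP[/leRP[q Eq] _].
  by apply/leRP; exists q; rewrite (rmuloM mulA) -Eq LD_mul_one.
- move: (ha); rewrite mem_LD => /andP[/leLP[p Ep] _].
  by apply/leLP; exists p; rewrite (lmuloM mulA) -Ep one_mul_LDs.
Qed.

Lemma mul_LD_LDs a b : a \in LD D -> b \in LDs D -> a ⋅ b \in D.
Proof.
move=> ha hb; case/andP: (mul_LD_LDs_RL ha hb) => Rab _.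
rewrite mem_D; apply: (Drel_trans mulA (y := a)); first by apply: Drel_L; rewrite -mem_LD.
by apply: Drel_R; rewrite Rrel_sym.
Qed.

Lemma mul_LD_GD a g : a \in LD D -> g \in GD D -> a ⋅ g \in LD D.
Proof.
move=> ha hg; case/andP: (mul_LD_LDs_RL ha (GD_LDs hg)) => _ Lag.
rewrite Lrel_sym in Lag; rewrite mem_LD (Lrel_trans mulA _ Lag) // -mem_LD.
exact: GD_LD.
Qed.
Lemma mul_GD_LDs g b : g \in GD D -> b \in LDs D -> g ⋅ b \in LDs D.
Proof.
move=> hg hb; case/andP: (mul_LD_LDs_RL (GD_LD hg) hb) => Rgb _.
rewrite Rrel_sym in Rgb; rewrite mem_LDs (Rrel_trans mulA _ Rgb) // -mem_LDs.
exact: GD_LDs.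
Qed.
Lemma mul_GD g h : g \in GD D -> h \in GD D -> g ⋅ h \in GD D.
Proof. by move=> hg hh; rewrite inE mul_LD_GD ?GD_LD ?mul_GD_LDs ?GD_LDs. Qed.

Lemma star_LD y : (star y \in LDs D) = (y \in LD D).
Proof. by rewrite mem_LDs mem_LD -{1}star_one (Rrel_star hstar). Qed.
Lemma star_LDs y : (star y \in LD D) = (y \in LDs D).
Proof. by rewrite -star_LD starK. Qed.
Lemma star_GD y : (star y \in GD D) = (y \in GD D).
Proof. by rewrite !in_setI star_LD star_LDs andbC. Qed.
Lemma star_D y : (star y \in D) = (y \in D).
Proof. by rewrite !mem_D -{1}star_one (Drel_star mulA hstar). Qed.

Lemma Lclass_LclassesIn y : y \in D -> Lclass mul y \in LclassesIn mul D.
Proof. by move=> hy; apply/imsetP; exists y. Qed.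

Lemma mul_LD_stable x a k : a \in LD D -> x ⋅ a ⋅ k \in D -> x ⋅ a \in LD D.
Proof.
rewrite !mem_LD => /andP[ea ae] hk.
have xa_e : leL mul (x ⋅ a) e by apply: leL_trans mulA _ _ _ (leL_mul _ _ _) ae.
rewrite /Lrel xa_e andbT; apply: (leL_stable mulA xa_e).
have /andP[e_xak _] := Drel_leJ mulA (Drel_Dclasses mulA hD one_in hk).
exact: leJ_trans mulA _ _ _ e_xak (leR_leJ (leR_mul _ _ _)).
Qed.

Section RepresentativeOfL.
Variables (L : {set S}) (hL : L \in LclassesIn mul D).

Lemma u_in : u L \in L. Proof. by case: (hu hD hL). Qed.
Lemma u_LDs : u L \in LDs D.
Proof. by rewrite mem_LDs Rrel_sym; case: (hu hD hL). Qed.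
Lemma star_u_LD : star (u L) \in LD D. Proof. by rewrite star_LDs u_LDs. Qed.
Lemma LclassE : L = Lclass mul (u L).
Proof.
case/imsetP: hL => x _ EL.
have : u L \in Lclass mul x by rewrite -EL u_in.
by rewrite inE => /(Lclass_eq mulA) <-.
Qed.
End RepresentativeOfL.

Section SandwichInD.
Variables (L K : {set S}) (hL : L \in LclassesIn mul D) (hK : K \in LclassesIn mul D).

Lemma sandwich_D g : g \in GD D -> sandwich L g K \in D.
Proof. by move=> hg; apply: mul_LD_LDs (mul_LD_GD (star_u_LD hL) hg) (u_LDs hK). Qed.

Lemma Lclass_sandwich g : g \in GD D -> Lclass mul (sandwich L g K) = K.
Proof.
move=> hg; case/andP: (mul_LD_LDs_RL (mul_LD_GD (star_u_LD hL) hg) (u_LDs hK)) => _ h.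
by rewrite (Lclass_eq mulA h) -LclassE.
Qed.

Lemma sandwich_inj g g' : g \in GD D -> g' \in GD D ->
  sandwich L g K = sandwich L g' K -> g = g'.
Proof.
have := star_u_LD hL; rewrite mem_LD => /andP[/leLP[r Er] _].
have := u_LDs hK; rewrite mem_LDs => /andP[/leRP[q Eq] _].
suff unsandwich k : k \in GD D -> lmulo r (rmulo (sandwich L k K) q) = k.
  by move=> hg hg' E; rewrite -(unsandwich g hg) E unsandwich.
move=> hk; rewrite /sandwich (rmuloM mulA) -Eq !(lmuloM mulA) -Er.
by rewrite one_mul_LDs ?GD_LDs // LD_mul_one ?GD_LD ?mul_GD.
Qed.
End SandwichInD.

Lemma Lclass_star_sandwich L K g : L \in LclassesIn mul D -> K \in LclassesIn mul D ->
  g \in GD D -> Lclass mul (star (sandwich L g K)) = L.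
Proof. by move=> hL hK hg; rewrite star_sandwich Lclass_sandwich ?star_GD. Qed.

(* Every z ∈ D is u_L^* g u_K with L the L-class of z^* and K that of z: write z = u_L^* p
   and z = p' u_K in S^1, and peel u_L^* and u_K off again using e = 1_D. *)
Lemma sandwich_exists z : z \in D ->
  exists2 g, g \in GD D & z = sandwich (Lclass mul (star z)) g (Lclass mul z).
Proof.
move=> hz; set L := Lclass mul (star z); set K := Lclass mul z.
have hL : L \in LclassesIn mul D by apply: Lclass_LclassesIn; rewrite star_D.
have hK : K \in LclassesIn mul D by apply: Lclass_LclassesIn.
have /andP[/leRP[p Ep] /leRP[t Et]] : Rrel mul z (star (u L)).
  by rewrite -[z]starK Rrel_star; have := u_in hL; rewrite inE.
have /andP[/leLP[p' Ep'] /leLP[t' Et']] : Lrel mul z (u K).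
  by have := u_in hK; rewrite inE.
have aLD := star_u_LD hL; have bLDs := u_LDs hK.
have := aLD; rewrite mem_LD => /andP[/leLP[r Er] _].
have := bLDs; rewrite mem_LDs => /andP[/leRP[q Eq] _].
set a := star (u L) in Er Ep Et aLD *; set b := u K in Eq Ep' Et' bLDs *.
have I1 : rmulo a r ⋅ z = z.
  by rewrite {2}Ep {1}Ep -(rmuloM mulA) -(mul_lmulo mulA) -Er LD_mul_one.
have I2 : rmulo z q ⋅ b = z.
  by rewrite -(mul_lmulo mulA) {1}Ep' -(lmuloM mulA) (mul_lmulo mulA) -Eq one_mul_LDs // -Ep'.
set g := lmulo r (rmulo z q).
have Ez : z = a ⋅ g ⋅ b by rewrite /g (mul_lmulo mulA) -(rmuloM mulA) I1 I2.
have eg : e ⋅ g = g by rewrite /g Er -(lmuloM mulA) (mul_lmulo mulA) -(rmuloM mulA) I1.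
have ge : g ⋅ e = g by rewrite /g -(lmuloM mulA) Eq -(rmuloM mulA) I2.
exists g => //.
rewrite inE mem_LD mem_LDs /Lrel /Rrel; apply/andP; split; apply/andP; split.
- apply/leLP; exists (Some (lmulo t' a)) => /=.
  by rewrite Eq Et' Ez !(lmuloM mulA) (rmuloM mulA) -Eq -mulA ge.
- by apply/leLP; exists (Some g) => /=; rewrite ge.
- apply/leRP; exists (Some (rmulo b t)) => /=.
  by rewrite Er Et Ez (rmuloM mulA) !(lmuloM mulA) -Er eg.
- by apply/leRP; exists (Some g) => /=; rewrite eg.
Qed.

Lemma LD_factor y : y \in LD D ->
  exists2 h, h \in GD D & y = star (u (Lclass mul (star y))) ⋅ h.
Proof.
move=> hy; have [g hg Ey] := sandwich_exists (LD_sub hy).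
have hK : Lclass mul y \in LclassesIn mul D by apply/Lclass_LclassesIn/LD_sub.
have uG : u (Lclass mul y) \in GD D.
  rewrite inE u_LDs // andbT mem_LD.
  by apply: (Lrel_trans mulA (y := y)); [rewrite -mem_LD | have := u_in hK; rewrite inE].
by exists (g ⋅ u (Lclass mul y)); rewrite ?mul_GD // {1}Ey /sandwich mulA.
Qed.

End OneDclass.

Definition gcoord z := odflt z [pick g in GD (Dclass mul z) |
   z == sandwich (Lclass mul (star z)) g (Lclass mul z)].

Lemma gcoord_spec z : gcoord z \in GD (Dclass mul z) /\
   z = sandwich (Lclass mul (star z)) (gcoord z) (Lclass mul z).
Proof.
have [g hg Eg] := sandwich_exists (Dclass_Dclasses mul z) (mem_Dclass mulA z).
rewrite /gcoord; case: pickP => [k /andP[hk /eqP Ek]|H] //=.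
by move: (H g); rewrite hg -Eg eqxx.
Qed.

Lemma sandwich_coords D L K g : D \in Dclasses mul -> L \in LclassesIn mul D ->
  K \in LclassesIn mul D -> g \in GD D ->
  [/\ Dclass mul (sandwich L g K) = D, Lclass mul (star (sandwich L g K)) = L,
      Lclass mul (sandwich L g K) = K & gcoord (sandwich L g K) = g].
Proof.
move=> hD hL hK hg.
have ED : Dclass mul (sandwich L g K) = D by rewrite -(DclassesP mulA hD (sandwich_D hD hL hK hg)).
have EL := Lclass_star_sandwich hD hL hK hg; have EK := Lclass_sandwich hD hL hK hg.
split => //; have [h1 h2] := gcoord_spec (sandwich L g K); rewrite ED EL EK in h1 h2.
by apply: (sandwich_inj hD hL hK) => //; rewrite -h2.
Qed.

(** * The cellular basis of R^alpha[S] *)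

Variables (R : comPzRingType) (alpha : S -> S -> R)
  (A1 : forall x y, alpha x y = alpha (star y) (star x)).
Variables (beta : {set S} -> S -> S -> R)
  (A3 : forall D, D \in Dclasses mul ->
     let L := LD D in let Ls := LDs D in
     [/\ (forall x y, x \in L -> y \in Ls -> is_unit (beta D x y)),
         (forall x y z, x \in L -> y \in Ls -> x ⋅ y \in L -> z \in Ls ->
             y ⋅ z \in Ls -> y \in L ->
             beta D x y * beta D (x ⋅ y) z = beta D x (y ⋅ z) * beta D y z),
         (forall x y z, x ⋅ y \in L -> z \in Ls -> y \in L ->
             alpha x y * beta D (x ⋅ y) z = alpha x (y ⋅ z) * beta D y z)
       & (forall x y, x \in L -> y \in Ls -> star y \in L -> star x \in Ls ->
             beta D x y = beta D (star y) (star x))]).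
Variables (Lam : finType) (LamD : {set S} -> {set Lam}) (leD : {set S} -> rel Lam)
  (Mt : finType) (MD : {set S} -> Lam -> {set Mt})
  (CD : {set S} -> Lam -> Mt -> Mt -> {ffun S -> R})
  (A4 : forall D, D \in Dclasses mul ->
     cellular (fun a : {ffun S -> R} => forall x, x \notin GD D -> a x = 0)
              (tmul mul (beta D)) (fstar star)
              (LamD D) (leD D) (MD D) (CD D)).

Local Notation fS := {ffun S -> R}.
Local Notation basis := (basis_el R).
Local Notation Lambda := (bigLam mul LamD).
Local Notation le_Lambda := (bigLe mul leD).
Local Notation M := (bigM mul MD).
Local Notation C := (bigC mul star one beta CD u).
Local Notation LIn D := (LclassesIn mul D).

Section BetaOnDclass.
Variables (D : {set S}) (hD : D \in Dclasses mul).

Lemma beta_unit x y : x \in LD D -> y \in LDs D -> exists r, beta D x y * r = 1.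
Proof. by case: (A3 hD) => + _ _ _; apply. Qed.

Lemma beta_cocycle x y z : x \in LD D -> y \in LDs D -> x ⋅ y \in LD D -> z \in LDs D ->
  y ⋅ z \in LDs D -> y \in LD D ->
  beta D x y * beta D (x ⋅ y) z = beta D x (y ⋅ z) * beta D y z.
Proof. by case: (A3 hD) => _ + _ _; apply. Qed.

Lemma alpha_beta x y z : x ⋅ y \in LD D -> z \in LDs D -> y \in LD D ->
  alpha x y * beta D (x ⋅ y) z = alpha x (y ⋅ z) * beta D y z.
Proof. by case: (A3 hD) => _ _ + _; apply. Qed.

Lemma beta_star x y : x \in LD D -> y \in LDs D -> star y \in LD D -> star x \in LDs D ->
  beta D x y = beta D (star y) (star x).
Proof. by case: (A3 hD) => _ _ _; apply. Qed.

Lemma CD_supp l s t x : l \in LamD D -> s \in MD D l -> t \in MD D l -> x \notin GD D ->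
  CD D l s t x = 0.
Proof. by move=> hl hs ht; have [_ [[inC _ _] _]] := A4 hD; apply: inC. Qed.
End BetaOnDclass.

(* The block of C attached to (D, L, K) is the image of R^β[G_D] under [lift D L K]. *)
Definition weight D L K g :=
  beta D (star (u L)) g * beta D (star (u L) ⋅ g) (u K).

Definition lift D L K (c : fS) : fS :=
  \sum_(g in GD D) fscale (c g * weight D L K g) (basis (sandwich L g K)).

Lemma bigC_lift p q1 q2 : C p q1 q2 = lift p.1 q1.1 q2.1 (CD p.1 p.2 q1.2 q2.2).
Proof. by apply: eq_bigr => g _; rewrite /weight mulrA. Qed.

Lemma liftE D L K c z : D \in Dclasses mul -> L \in LIn D -> K \in LIn D ->
  lift D L K c z =
  if [&& Dclass mul z == D, Lclass mul (star z) == L & Lclass mul z == K]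
  then c (gcoord z) * weight D L K (gcoord z) else 0.
Proof.
move=> hD hL hK; rewrite /lift sum_ffunE.
under eq_bigr => g _ do rewrite fscaleE basis_elE.
case: ifP => [/and3P[/eqP ED /eqP EL /eqP EK]|zDLK].
  have [gz Ez] := gcoord_spec z; rewrite ED EL EK in gz Ez.
  rewrite (bigD1 (gcoord z)) //= -Ez eqxx mulr1 big1 ?addr0 // => g /andP[hg ng].
  case: eqP => [Ez'|]; last by rewrite mulr0.
  have [_ _ _ Eg] := sandwich_coords hD hL hK hg.
  by rewrite -Ez' in Eg; rewrite Eg eqxx in ng.
apply: big1 => g hg; case: eqP => [Ez|]; last by rewrite mulr0.
by have [E1 E2 E3 _] := sandwich_coords hD hL hK hg; move: zDLK; rewrite Ez E1 E2 E3 !eqxx.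
Qed.

Lemma liftD D L K a b : lift D L K (a + b) = lift D L K a + lift D L K b.
Proof. by rewrite /lift -big_split; apply: eq_bigr => g _; rewrite ffunE mulrDl fscaleDl. Qed.
Lemma liftN D L K a : lift D L K (- a) = - lift D L K a.
Proof. by rewrite /lift -sumrN; apply: eq_bigr => g _; rewrite ffunE mulNr fscaleNl. Qed.
Lemma liftZ D L K r a : lift D L K (fscale r a) = fscale r (lift D L K a).
Proof. by rewrite /lift fscale_sumr; apply: eq_bigr => g _; rewrite ffunE fscaleA mulrA. Qed.
Lemma lift0 D L K : lift D L K 0 = 0.
Proof. by rewrite /lift big1 // => g _; rewrite ffunE mul0r fscale0. Qed.
Lemma lift_sum D L K (I : finType) (P : pred I) (F : I -> fS) :
  lift D L K (\sum_(i | P i) F i) = \sum_(i | P i) lift D L K (F i).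
Proof. exact: (big_morph _ (liftD D L K) (lift0 D L K)). Qed.
Lemma lift_basis D L K k : k \in GD D ->
  lift D L K (basis k) = fscale (weight D L K k) (basis (sandwich L k K)).
Proof.
move=> hk; rewrite /lift (bigD1 k) //= big1 => [|g /andP[_ ng]].
  by rewrite addr0 basis_elE eqxx mul1r.
by rewrite basis_elE (negbTE ng) mul0r fscale0.
Qed.

Lemma weight_unit D L K g : D \in Dclasses mul -> L \in LIn D -> K \in LIn D ->
  g \in GD D -> exists w, weight D L K g * w = 1.
Proof.
move=> hD hL hK hg; have aL := star_u_LD hD hL.
have [r1 E1] := beta_unit hD aL (GD_LDs hg).
have [r2 E2] := beta_unit hD (mul_LD_GD hD aL hg) (u_LDs hD hK).
by exists (r1 * r2); rewrite /weight mulrACA E1 E2 mulr1.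
Qed.

Lemma weight_star D L K g : D \in Dclasses mul -> L \in LIn D -> K \in LIn D ->
  g \in GD D -> weight D L K (star g) = weight D K L g.
Proof.
move=> hD hL hK hg; have gs : star g \in GD D by rewrite star_GD.
have aL := star_u_LD hD hL; have aK := star_u_LD hD hK.
have bL := u_LDs hD hL; have bK := u_LDs hD hK.
have e1 : beta D (star (u L)) (star g) = beta D g (u L).
  have gL : star (star g) \in LD D by rewrite starK GD_LD.
  have uL : star (star (u L)) \in LDs D by rewrite starK.
  by rewrite (beta_star hD aL (GD_LDs gs) gL uL) !starK.
have e2 : beta D (star (u L) ⋅ star g) (u K) = beta D (star (u K)) (g ⋅ u L).
  have gu : star (star (u L) ⋅ star g) \in LDs D by rewrite starM !starK mul_GD_LDs.
  by rewrite (beta_star hD (mul_LD_GD hD aL gs) bK aK gu) starM !starK.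
rewrite /weight e1 e2 mulrC; symmetry.
exact: (beta_cocycle hD aK (GD_LDs hg) (mul_LD_GD hD aK hg) bL (mul_GD_LDs hD hg bL) (GD_LD hg)).
Qed.

Local Notation combD D := (comb (LamD D) (MD D) (CD D)).

Lemma comb_bigCE coef z :
  comb Lambda M C coef z =
  weight (Dclass mul z) (Lclass mul (star z)) (Lclass mul z) (gcoord z) *
  combD (Dclass mul z)
    (fun l s t => coef (Dclass mul z, l) (Lclass mul (star z), s) (Lclass mul z, t))
    (gcoord z).
Proof.
set D := Dclass mul z; set L := Lclass mul (star z); set K := Lclass mul z.
have hD : D \in Dclasses mul := Dclass_Dclasses mul z.
have zD : z \in D := mem_Dclass mulA z.
have hL : L \in LIn D by apply: Lclass_LclassesIn; rewrite ?star_D.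
have hK : K \in LIn D by apply: Lclass_LclassesIn.
have Cz p q1 q2 : p \in Lambda -> q1 \in M p -> q2 \in M p ->
    coef p q1 q2 * C p q1 q2 z =
    if [&& D == p.1, L == q1.1 & K == q2.1]
    then coef p q1 q2 * (CD p.1 p.2 q1.2 q2.2 (gcoord z) * weight p.1 q1.1 q2.1 (gcoord z))
    else 0.
  rewrite !inE => /andP[hp1 _] /andP[hq1 _] /andP[hq2 _].
  by rewrite bigC_lift liftE // [Dclass _ _ == _]eq_sym [Lclass _ _ == _]eq_sym
    [Lclass _ z == _]eq_sym; case: ifP; rewrite ?mulr0.
rewrite combE combE mulr_sumr.
rewrite (big_pair_fst (a := D)) => [|p hp nD]; last first.
  by apply: big1 => q1 hq1; apply: big1 => q2 hq2; rewrite Cz // eq_sym (negbTE nD).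
apply: eq_big => [l|l hl]; first by rewrite inE hD.
rewrite (big_pair_fst (a := L)) => [|q1 hq1 nL]; last first.
  by apply: big1 => q2 hq2; rewrite Cz //= eqxx eq_sym (negbTE nL).
rewrite mulr_sumr; apply: eq_big => [s|s hs]; first by rewrite inE /= hL.
rewrite (big_pair_fst (a := K)) => [|q2 hq2 nK]; last first.
  by rewrite Cz //= !eqxx eq_sym (negbTE nK).
rewrite mulr_sumr; apply: eq_big => [t|t ht]; first by rewrite inE /= hK.
by rewrite Cz //= !eqxx mulrA mulrC.
Qed.

Lemma unit_cancel (w w' r : R) : w * w' = 1 -> w * r = 0 -> r = 0.
Proof. by move=> ww' wr; rewrite -[r]mul1r -ww' mulrAC wr mul0r. Qed.

Lemma bigC_free coef : comb Lambda M C coef = 0 ->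
  forall p q1 q2, p \in Lambda -> q1 \in M p -> q2 \in M p -> coef p q1 q2 = 0.
Proof.
move=> coef0 [D l] [L s] [K t]; rewrite !inE /= => /andP[hD hl] /andP[hL hs] /andP[hK ht].
have [_ [[_ freeCD _] _]] := A4 hD.
apply: (freeCD (fun l' s' t' => coef (D, l') (L, s') (K, t'))) hl hs ht.
apply/ffunP => h; rewrite ffunE.
have [hG|hG] := boolP (h \in GD D); last first.
  rewrite combE; apply: big1 => l' hl'; apply: big1 => s' hs'; apply: big1 => t' ht'.
  by rewrite CD_supp ?mulr0.
have [E1 E2 E3 E4] := sandwich_coords hD hL hK hG.
have := comb_bigCE coef (sandwich L h K); rewrite coef0 ffunE E1 E2 E3 E4 => /esym.
by have [w' Hw] := weight_unit hD hL hK hG; apply: (unit_cancel Hw).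
Qed.

Lemma weight_inverse : exists winv : {set S} -> {set S} -> {set S} -> S -> R,
  forall D L K h, D \in Dclasses mul -> L \in LIn D -> K \in LIn D -> h \in GD D ->
    weight D L K h * winv D L K h = 1.
Proof.
have /choice[f Hf] : forall p : {set S} * {set S} * {set S} * S, exists w,
    let: (D, L, K, h) := p in
    [&& D \in Dclasses mul, L \in LIn D, K \in LIn D & h \in GD D] ->
    weight D L K h * w = 1.
  move=> [[[D L] K] h]; have [/and4P[hD hL hK hh]|_] := boolP [&& _, _, _ & _].
    by have [w Hw] := weight_unit hD hL hK hh; exists w.
  by exists 0.
exists (fun D L K h => f (D, L, K, h)) => D L K h hD hL hK hh.
by apply: (Hf (D, L, K, h)); rewrite hD hL hK hh.
Qed.

(* The coefficient of z = u_L^* h u_K in a is read off from the block (D, L, K) at h. *)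
Lemma bigC_span (a : fS) : exists coef, a = comb Lambda M C coef.
Proof.
have [winv Hwinv] := weight_inverse.
pose b D L K : fS :=
  [ffun h => if h \in GD D then a (sandwich L h K) * winv D L K h else 0].
have /choice[fc Hfc] : forall p : {set S} * {set S} * {set S}, exists c,
    p.1.1 \in Dclasses mul -> b p.1.1 p.1.2 p.2 = combD p.1.1 c.
  move=> [[D L] K] /=; have [hD|] := boolP (D \in Dclasses mul); last first.
    by exists (fun _ _ _ => 0).
  have [_ [[_ _ spanCD] _]] := A4 hD.
  have [|c Ec] := spanCD (b D L K); last by exists c.
  by move=> x hx; rewrite ffunE (negbTE hx).
exists (fun p q1 q2 => fc (p.1, q1.1, q2.1) p.2 q1.2 q2.2).
apply/ffunP => z; rewrite comb_bigCE /=.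
set D := Dclass mul z; set L := Lclass mul (star z); set K := Lclass mul z.
have hD : D \in Dclasses mul := Dclass_Dclasses mul z.
have hL : L \in LIn D by apply: Lclass_LclassesIn; rewrite star_D ?mem_Dclass.
have hK : K \in LIn D by apply: Lclass_LclassesIn; rewrite mem_Dclass.
have [gz Ez] := gcoord_spec z.
rewrite -(Hfc (D, L, K)) // ffunE gz -Ez mulrCA Hwinv ?mulr1 //.
Qed.

Local Notation lower := (in_lower Lambda le_Lambda M C).

Lemma comb_restrict coef D0 z :
  comb Lambda M C (fun p q1 q2 => if p.1 == D0 then coef p q1 q2 else 0) z =
  if Dclass mul z == D0 then comb Lambda M C coef z else 0.
Proof.
rewrite !comb_bigCE; case: eqP => // _.
by rewrite combE big1 ?mulr0 // => l _; apply: big1 => s _; apply: big1 => t _; rewrite mul0r.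
Qed.

Lemma basis_lower D l z : ltDcl mul (Dclass mul z) D -> lower (D, l) (basis z).
Proof.
move=> zD; have [coef Ecoef] := bigC_span (basis z).
have -> : basis z = comb Lambda M C
    (fun p q1 q2 => if p.1 == Dclass mul z then coef p q1 q2 else 0).
  apply/ffunP => y; rewrite comb_restrict -Ecoef basis_elE.
  by case: eqP => [->|]; rewrite ?eqxx //; case: eqP => // ->.
apply: in_lower_sum => mu hmu; case: eqP => Emu; last first.
  rewrite big1; first exact: in_lower0.
  by move=> q1 _; apply: big1 => q2 _; rewrite fscale0.
apply: in_lower_sum => q1 hq1; apply: in_lower_sum => q2 hq2; apply: in_lowerZ.
apply: in_lower_C => //; first by rewrite /bigLe /= Emu zD.
by apply: contraTneq zD => Emu'; rewrite -Emu Emu' ltDcl_irr.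
Qed.

Lemma lift_lower D l L K c : D \in Dclasses mul -> L \in LIn D -> K \in LIn D ->
  in_lower (LamD D) (leD D) (MD D) (CD D) l c -> lower (D, l) (lift D L K c).
Proof.
move=> hD hL hK [d ->]; rewrite lift_sum; apply: in_lower_sum => mu /andP[hmu lt_mu].
rewrite lift_sum; apply: in_lower_sum => s hs; rewrite lift_sum; apply: in_lower_sum => t ht.
rewrite liftZ; apply: in_lowerZ; rewrite -[lift _ _ _ _]/(lift (D, mu).1 (L, s).1 (K, t).1 _).
rewrite -bigC_lift; case/andP: lt_mu => le_mu ne_mu.
apply: in_lower_C; rewrite ?inE /= ?hD ?hmu ?hL ?hK ?hs ?ht //.
- by rewrite /bigLe /= eqxx le_mu orbT.
- by rewrite xpair_eqE eqxx.
Qed.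

(* Each x u_L^* g u_K then lies in a D-class strictly J-below D. *)
Lemma tmul_basis_lift_lower D l L K x c : D \in Dclasses mul -> L \in LIn D ->
  K \in LIn D -> x ⋅ star (u L) \notin LD D ->
  lower (D, l) (tmul mul alpha (basis x) (lift D L K c)).
Proof.
move=> hD hL hK xa; rewrite /lift tmul_basis_sum.
apply: in_lower_sum => g hg; apply: in_lowerZ; apply: basis_lower.
have aLD := star_u_LD hD hL.
apply: (ltDcl_leJ mulA (one_in hD)).
  apply: leJ_trans mulA _ _ _ _ (leL_leJ (_ : leL mul (star (u L)) (one D))).
    by apply/leJP; exists (Some x), (Some (g ⋅ u K)); rewrite /= /sandwich !mulA.
  by move: aLD; rewrite mem_LD => /andP[].
apply: contra xa => xz; apply: (mul_LD_stable hD (k := g ⋅ u K) aLD).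
by move: xz; rewrite /sandwich !mulA.
Qed.

Lemma weight_left_mul D L L' K x h g : D \in Dclasses mul -> L \in LIn D ->
  L' \in LIn D -> K \in LIn D -> h \in GD D -> g \in GD D ->
  x ⋅ star (u L) = star (u L') ⋅ h ->
  beta D (star (u L')) h * (weight D L K g * alpha x (sandwich L g K)) =
  alpha x (star (u L)) * (beta D h g * weight D L' K (h ⋅ g)).
Proof.
move=> hD hL hL' hK hh hg Exa; rewrite /weight /sandwich.
set a := star (u L) in Exa *; set v := star (u L') in Exa *; set b := u K.
have aL : a \in LD D := star_u_LD hD hL.
have vL : v \in LD D := star_u_LD hD hL'.
have xaL : x ⋅ a \in LD D by rewrite Exa (mul_LD_GD hD vL hh).
have xagL : x ⋅ (a ⋅ g) \in LD D by rewrite mulA (mul_LD_GD hD xaL hg).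
have e1 := alpha_beta hD (z := b) xagL (u_LDs hD hK) (mul_LD_GD hD aL hg).
have e2 := alpha_beta hD (z := g) xaL (GD_LDs hg) aL.
have e3 := beta_cocycle hD vL (GD_LDs hh) (mul_LD_GD hD vL hh) (GD_LDs hg)
  (mul_GD_LDs hD hh (GD_LDs hg)) (GD_LD hh).
rewrite -Exa in e3; have -> : v ⋅ (h ⋅ g) = x ⋅ (a ⋅ g) by rewrite mulA -Exa mulA.
transitivity (beta D v h * beta D a g * (alpha x (a ⋅ g ⋅ b) * beta D (a ⋅ g) b)).
  by ring.
rewrite -e1.
transitivity (beta D v h * beta D (x ⋅ (a ⋅ g)) b * (alpha x (a ⋅ g) * beta D a g)).
  by ring.
rewrite -e2.
transitivity (alpha x a * beta D (x ⋅ (a ⋅ g)) b * (beta D v h * beta D (x ⋅ a) g)).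
  by ring.
by rewrite e3; ring.
Qed.

(* When x u_L^* = u_L'^* h, left multiplication by x on block (L, K) is left multiplication
   by h in R^β[G_D] transported to block (L', K), up to the displayed scalars. *)
Lemma tmul_basis_lift D L L' K x h (c : fS) : D \in Dclasses mul -> L \in LIn D ->
  L' \in LIn D -> K \in LIn D -> h \in GD D -> x ⋅ star (u L) = star (u L') ⋅ h ->
  (forall y, y \notin GD D -> c y = 0) ->
  fscale (beta D (star (u L')) h) (tmul mul alpha (basis x) (lift D L K c)) =
  fscale (alpha x (star (u L))) (lift D L' K (tmul mul (beta D) (basis h) c)).
Proof.
move=> hD hL hL' hK hh Exa c0.
rewrite [in RHS](ffun_basis_expansion c0) tmul_basis_sum lift_sum fscale_sumr.
rewrite [lift D L K c]/lift tmul_basis_sum fscale_sumr; apply: eq_bigr => g hg.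
rewrite liftZ lift_basis ?mul_GD // !fscaleA.
have -> : x ⋅ sandwich L g K = sandwich L' (h ⋅ g) K by rewrite /sandwich !mulA Exa.
congr fscale.
transitivity (c g * (beta D (star (u L')) h * (weight D L K g * alpha x (sandwich L g K)))).
  by ring.
by rewrite (weight_left_mul hD hL hL' hK hh hg Exa); ring.
Qed.

Lemma bigC_row_sum D l L K t (r : Mt -> R) : L \in LIn D ->
  \sum_(q in M (D, l)) fscale (if q.1 == L then r q.2 else 0) (C (D, l) q (K, t)) =
  lift D L K (\sum_(s in MD D l) fscale (r s) (CD D l s t)).
Proof.
move=> hL; rewrite (big_pair_fst (a := L)) => [|q _ nq]; last by rewrite (negbTE nq) fscale0.
rewrite lift_sum; apply: eq_big => [s|s _]; first by rewrite !inE /= hL.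
by rewrite eqxx bigC_lift liftZ.
Qed.

Lemma bigC_mul_basis p q1 x : p \in Lambda -> q1 \in M p -> exists r : {set S} * Mt -> R,
  forall q2, q2 \in M p ->
  lower p (tmul mul alpha (basis x) (C p q1 q2) - \sum_(q in M p) fscale (r q) (C p q q2)).
Proof.
case: p q1 => D l [L s]; rewrite !inE /= => /andP[hD hl] /andP[hL hs].
have [xaL|xaL] := boolP (x ⋅ star (u L) \in LD D); last first.
  exists (fun _ => 0) => -[K t]; rewrite inE /= => /andP[hK _].
  rewrite big1 ?subr0 => [|q _]; last exact: fscale0.
  by rewrite bigC_lift; apply: tmul_basis_lift_lower.
have [h hh Exa] := LD_factor hD xaL.
set L' := Lclass mul (star (x ⋅ star (u L))) in Exa.
have hL' : L' \in LIn D by apply: Lclass_LclassesIn; rewrite (star_D hD) (LD_sub hD xaL).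
have [bi Ebi] := beta_unit hD (star_u_LD hD hL') (GD_LDs hh).
have hG : forall y, y \notin GD D -> basis h y = 0.
  by move=> y hy; rewrite basis_elE; case: eqP => // Ey; rewrite Ey hh in hy.
have [_ [_ [_ C3D]]] := A4 hD; have [rD HrD] := C3D l s (basis h) hl hs hG.
pose kappa := bi * alpha x (star (u L)).
exists (fun q => if q.1 == L' then kappa * rD q.2 else 0) => -[K t].
rewrite inE /= => /andP[hK ht].
have Ex : tmul mul alpha (basis x) (C (D, l) (L, s) (K, t)) =
    fscale kappa (lift D L' K (tmul mul (beta D) (basis h) (CD D l s t))).
  rewrite /kappa -fscaleA -(tmul_basis_lift hD hL hL' hK hh Exa) => [|y]; last exact: CD_supp.
  by rewrite bigC_lift fscaleA mulrC Ebi fscale1.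
rewrite Ex (@bigC_row_sum D l L' K t (fun s' => kappa * rD s') hL').
under eq_bigr => s' _ do rewrite -fscaleA.
rewrite -fscale_sumr liftZ.
rewrite -fscaleNr -fscaleDr -liftN -liftD; apply/in_lowerZ/lift_lower => //.
exact: HrD.
Qed.

Lemma bigC_mul p q1 (a : fS) : p \in Lambda -> q1 \in M p -> exists r : {set S} * Mt -> R,
  forall q2, q2 \in M p ->
  lower p (tmul mul alpha a (C p q1 q2) - \sum_(q in M p) fscale (r q) (C p q q2)).
Proof.
move=> hp hq1; have /choice[r Hr] := fun x => bigC_mul_basis x hp hq1.
exists (fun q => \sum_x a x * r x q) => q2 hq2.
have -> : tmul mul alpha a (C p q1 q2) -
          \sum_(q in M p) fscale (\sum_x a x * r x q) (C p q q2) =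
          \sum_x fscale (a x) (tmul mul alpha (basis x) (C p q1 q2) -
                                \sum_(q in M p) fscale (r x q) (C p q q2)).
  under [in RHS]eq_bigr => x _ do rewrite fscaleDr fscaleNr fscale_sumr.
  rewrite sumrB tmul_expand_left; congr (_ - _).
  rewrite [RHS]exchange_big /=; apply: eq_bigr => q _.
  apply/ffunP => z; rewrite fscaleE [in RHS]sum_ffunE mulr_suml.
  by apply: eq_bigr => x _; rewrite !fscaleE mulrA.
by apply: in_lower_sum => x _; apply/in_lowerZ/Hr.
Qed.

Lemma fstarK (a : fS) : fstar star (fstar star a) = a.
Proof. by apply/ffunP => z; rewrite !ffunE starK. Qed.

Lemma fstar_linear r (a b : fS) :
  fstar star (fscale r a + b) = fscale r (fstar star a) + fstar star b.
Proof. by apply/ffunP => z; rewrite !ffunE. Qed.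

Lemma fstar_tmul (a b : fS) :
  fstar star (tmul mul alpha a b) = tmul mul alpha (fstar star b) (fstar star a).
Proof.
apply/ffunP => z; rewrite !ffunE.
under eq_bigr => x _ do rewrite big_mkcond.
under [in RHS]eq_bigr => x _ do rewrite big_mkcond.
rewrite exchange_big [in RHS](reindex_inj (star_inj hstar)) /=; apply: eq_bigr => y _.
rewrite (reindex_inj (star_inj hstar)) /=; apply: eq_bigr => x _.
rewrite !ffunE !starK -(inj_eq (star_inj hstar)) starM starK [alpha (star x) y]A1 starK.
by rewrite starK; case: ifP => // _; rewrite [a _ * b _]mulrC.
Qed.

Lemma fstar_bigC p q1 q2 : p \in Lambda -> q1 \in M p -> q2 \in M p ->
  fstar star (C p q1 q2) = C p q2 q1.
Proof.
case: p q1 q2 => D l [L s] [K t]; rewrite !inE /= => /andP[hD hl] /andP[hL hs] /andP[hK ht].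
rewrite !bigC_lift /= /lift (reindex_inj (star_inj hstar)) /=.
apply/ffunP => z; rewrite ffunE !sum_ffunE.
apply: eq_big => [g|g hg]; first by rewrite star_GD.
have [_ [_ [[_ _ _ _ starCD] _]]] := A4 hD.
move: hg; rewrite (star_GD hD) => hg.
rewrite -(starCD l s t hl hs ht) !fscaleE [fstar _ _ g]ffunE !basis_elE -(inj_eq (star_inj hstar)).
by rewrite star_sandwich !starK (weight_star hD hL hK hg).
Qed.

Lemma bigLe_refl : {in Lambda, forall p, le_Lambda p p}.
Proof.
move=> [D l]; rewrite inE /= => /andP[hD hl].
by have [[refl _ _] _] := A4 hD; rewrite /bigLe /= eqxx refl ?orbT.
Qed.

Lemma bigLe_anti : {in Lambda &, forall p q, le_Lambda p q -> le_Lambda q p -> p = q}.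
Proof.
move=> [D1 l1] [D2 l2]; rewrite !inE /= => /andP[h1 hl1] /andP[h2 hl2].
rewrite /bigLe /= => /orP[lt12|/andP[/eqP E12 le12]] /orP[lt21|/andP[/eqP E21 le21]].
- case/andP: lt12 => le12 ne12; case/andP: lt21 => le21 _.
  by rewrite (leDcl_anti mulA h1 h2 le12 le21) eqxx in ne12.
- by rewrite E21 ltDcl_irr in lt12.
- by rewrite E12 ltDcl_irr in lt21.
- by subst D2; have [[_ anti _] _] := A4 h1; rewrite (anti l1 l2).
Qed.

Lemma bigLe_trans : {in Lambda & &, forall p q r, le_Lambda p q -> le_Lambda q r ->
  le_Lambda p r}.
Proof.
move=> [D1 l1] [D2 l2] [D3 l3]; rewrite !inE /= => /andP[h1 hl1] /andP[h2 hl2] /andP[h3 hl3].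
rewrite /bigLe /= => /orP[lt12|/andP[/eqP E12 le12]] /orP[lt23|/andP[/eqP E23 le23]].
- by rewrite (ltDcl_trans mulA h1 h2 lt12 lt23).
- by rewrite -E23 lt12.
- by rewrite E12 lt23.
- by subst D2 D3; have [[_ _ trans] _] := A4 h1; rewrite eqxx (trans l1 l2 l3) ?orbT.
Qed.

Lemma bigC_cellular :
  cellular (fun _ : fS => True) (tmul mul alpha) (fstar star) Lambda le_Lambda M C.
Proof.
split; first by split; [exact: bigLe_refl | exact: bigLe_anti | exact: bigLe_trans].
split; first by split=> [//||a _]; [apply: bigC_free | apply: bigC_span].
split; last by move=> p q1 a hp hq1 _; apply: bigC_mul.
split=> //.
- by move=> a _; apply: fstarK.
- by move=> r a b _ _; apply: fstar_linear.
- by move=> a b _ _; apply: fstar_tmul.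
- exact: fstar_bigC.
Qed.

End CellularStructure.

Unset Implicit Arguments.

Theorem theorem5
  (S : finType) (mul : S -> S -> S) (mul_assoc : associative mul)
  (star : S -> S) (hstar : anti_involution mul star)
  (R : comPzRingType) (alpha : S -> S -> R) (halpha : twisting mul alpha)
  (A1 : forall x y, alpha x y = alpha (star y) (star x))
  (one : {set S} -> S)
  (A2 : forall D, D \in Dclasses mul ->
          [/\ one D \in D, mul (one D) (one D) = one D & star (one D) = one D])
  (beta : {set S} -> S -> S -> R)
  (A3 : forall D, D \in Dclasses mul ->
     let L := LD mul one D in let Ls := LDs mul star one D in
     [/\ (forall x y, x \in L -> y \in Ls -> is_unit (beta D x y)),
         (forall x y z, x \in L -> y \in Ls -> mul x y \in L -> z \in Ls ->
             mul y z \in Ls -> y \in L ->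
             beta D x y * beta D (mul x y) z = beta D x (mul y z) * beta D y z),
         (forall x y z, mul x y \in L -> z \in Ls -> y \in L ->
             alpha x y * beta D (mul x y) z = alpha x (mul y z) * beta D y z)
       & (forall x y, x \in L -> y \in Ls -> star y \in L -> star x \in Ls ->
             beta D x y = beta D (star y) (star x))])
  (Lam : finType) (LamD : {set S} -> {set Lam}) (leD : {set S} -> rel Lam)
  (Mt : finType) (MD : {set S} -> Lam -> {set Mt})
  (CD : {set S} -> Lam -> Mt -> Mt -> {ffun S -> R})
  (A4 : forall D, D \in Dclasses mul ->
     cellular (fun a : {ffun S -> R} =>
                 forall x, x \notin GD mul star one D -> a x = 0)
              (tmul mul (beta D)) (fstar star)
              (LamD D) (leD D) (MD D) (CD D))
  (u : {set S} -> S)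
  (hu : forall D, D \in Dclasses mul -> forall L, L \in LclassesIn mul D ->
          u L \in L /\ Rrel mul (u L) (one D)) :
  cellular (fun _ : {ffun S -> R} => True) (tmul mul alpha) (fstar star)
    (bigLam mul LamD) (bigLe mul leD) (bigM mul MD)
    (bigC mul star one beta CD u).
Proof. exact: (bigC_cellular mul_assoc hstar A2 hu A1 A3 A4). Qed.
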